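(* Let $\gamma>2$, $\beta_c>0$ and $a=\gamma-1$. For $\mu>0$ define $$R(\mu)=\frac{e^{\beta_c\mu}}{4\sinh^2(a\beta_c\mu/2)}\Big(e^{a\beta_c\mu}F_a(-e^{\beta_c\mu})-2F_a(-1)+e^{-a\beta_c\mu}F_a(-e^{-\beta_c\mu})\Big),$$ where $F_a(w)={}_3F_2(1,a,a;1+a,1+a;w)$. Then $$\lim_{\mu\to\infty}R(\mu)=\left(\frac{\gamma-1}{\gamma-2}\right)^2 .$$ Equivalently, for the Type A model with cut-off $\mu$ at the temperature $T=T_c=1/\beta_c$ (so $\alpha=\gamma-1$), $\dfrac{2L_g}{N(N-1)}\,e^{\beta_c\mu}\to\left(\frac{\gamma-1}{\gamma-2}\right)^2$ as $\mu\to\infty$. *)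

From Stdlib Require Import Reals.
From Coquelicot Require Import Coquelicot.
Open Scope R_scope.

(* F_a(w) = 3F2(1,a,a;1+a,1+a;w).  Since (1)_n/n! = 1 and (a)_n/(1+a)_n = a/(a+n),
   the hypergeometric series is  a^2 * sum_n w^n/(n+a)^2  for |w|<1.  Its (principal
   branch) analytic continuation to w in C \ [1,oo) is given by the integral
   representation  a^2 * int_0^1 t^(a-1) (-ln t) / (1 - w t) dt
   (use 1/(n+a)^2 = int_0^1 t^(n+a-1)(-ln t) dt).  We only need w <= 0.
   For a > 1 the integrand is continuous on [0,1] (value 0 at t = 0 with the
   Stdlib conventions ln 0 = 0, Rpower 0 _ = 1), so the Riemann integral is proper. *)
Definition F3F2 (a w : R) : R :=
  a ^ 2 * RInt (fun t => Rpower t (a - 1) * (- ln t) / (1 - w * t)) 0 1.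

Definition Rmu (gamma beta_c mu : R) : R :=
  let a := gamma - 1 in
  exp (beta_c * mu) / (4 * (sinh (a * beta_c * mu / 2)) ^ 2) *
  (exp (a * beta_c * mu) * F3F2 a (- exp (beta_c * mu))
   - 2 * F3F2 a (-1)
   + exp (- (a * beta_c * mu)) * F3F2 a (- exp (- (beta_c * mu)))).

From Stdlib Require Import Reals Lra.
From Coquelicot Require Import Coquelicot.
Open Scope R_scope.

(* With c = a - 1 > 0 we have F_a(w) = a^2 J_c(w), J_c(w) = int_0^1 t^c (-ln t) / (1 - w t) dt,
   and |J_c(w)| <= 1/c for w <= 0.  Writing sinh through exp(a x / 2), x = beta_c mu, turns
   R(mu) into a^2 (e^x J_c(-e^x) - 2 e^(-c x) J_c(-1) + e^(-(2a-1) x) J_c(-e^(-x))) / (1 - e^(-a x))^2,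
   so only the first term survives.  Finally s J_c(-s) -> int_0^1 t^(c-1) (-ln t) dt = 1/c^2:
   on [e, 1] the integrands t^c (-ln t) s / (1 + s t) and t^(c-1) (-ln t) differ by at most
   1/(c s e^2), and the contributions of [0, e] are controlled by the primitive
   t^c (-ln t / c + 1/c^2) of t^(c-1) (-ln t), which tends to 0 with t. *)

Definition log_weight (c t : R) : R := Rpower t c * (- ln t).

Definition J_integrand (c w t : R) : R := log_weight c t / (1 - w * t).

Definition J (c w : R) : R := RInt (J_integrand c w) 0 1.

Lemma F3F2_J a w : F3F2 a w = a ^ 2 * J (a - 1) w.
Proof. reflexivity. Qed.

Lemma ln_le_0 t : 0 < t <= 1 -> ln t <= 0.
Proof. intros [Ht H1]. rewrite <- ln_1. apply ln_le; lra. Qed.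

Lemma ln_nonpos_arg t : t <= 0 -> ln t = 0.
Proof. intros H. unfold ln. destruct (Rlt_dec 0 t); [exfalso; lra | reflexivity]. Qed.

Lemma log_weight_nonpos_arg c t : t <= 0 -> log_weight c t = 0.
Proof. intros H. unfold log_weight. rewrite ln_nonpos_arg by exact H. ring. Qed.

Lemma log_weight_bounds c t : 0 < c -> 0 <= t <= 1 -> 0 <= log_weight c t <= / c.
Proof.
  intros Hc [H0 H1].
  assert (Hinv : 0 < / c) by (apply Rinv_0_lt_compat; exact Hc).
  destruct (Req_dec t 0) as [-> | Ht].
  { rewrite log_weight_nonpos_arg by lra. lra. }
  assert (HL : ln t <= 0) by (apply ln_le_0; lra).
  unfold log_weight, Rpower. set (L := ln t) in *.
  assert (Hprod : exp (c * L) * exp (- (c * L)) = 1)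
    by (rewrite <- exp_plus, Rplus_opp_r; apply exp_0).
  (* [-cL <= exp(-cL) - 1], then multiply by [t^c = exp(cL)] *)
  pose proof (exp_ineq1_le (- (c * L))).
  pose proof (exp_pos (c * L)).
  split; [apply Rmult_le_pos; lra |].
  apply (Rmult_le_reg_l c); [exact Hc |]. rewrite Rinv_r by lra. nra.
Qed.

Lemma log_weight_le_Rpower_half c t :
  0 < c -> 0 < t <= 1 -> log_weight c t <= 2 / c * Rpower t (c / 2).
Proof.
  intros Hc Ht.
  assert (Hsplit : log_weight c t = Rpower t (c / 2) * log_weight (c / 2) t).
  { unfold log_weight. rewrite <- Rmult_assoc, <- Rpower_plus. do 2 f_equal. field. }
  rewrite Hsplit.
  destruct (log_weight_bounds (c / 2) t ltac:(lra) ltac:(lra)) as [_ Hle].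
  pose proof (exp_pos (c / 2 * ln t)). fold (Rpower t (c / 2)) in *.
  replace (2 / c) with (/ (c / 2)) by (field; lra).
  rewrite Rmult_comm. apply Rmult_le_compat_r; lra.
Qed.

Lemma Rpower_small p eps : 0 < p -> 0 < eps ->
  exists d, 0 < d <= 1 /\ forall t, 0 < t < d -> Rpower t p < eps.
Proof.
  intros Hp Heps. exists (Rmin 1 (Rpower eps (/ p))).
  pose proof (exp_pos (/ p * ln eps)). fold (Rpower eps (/ p)) in *.
  split; [split; [apply Rmin_pos; lra | apply Rmin_l] |].
  intros t [Ht Htd].
  replace eps with (Rpower (Rpower eps (/ p)) p).
  - apply Rlt_Rpower_l; [exact Hp |].
    split; [exact Ht |]. eapply Rlt_le_trans; [exact Htd | apply Rmin_r].
  - rewrite Rpower_mult, Rinv_l by lra. apply Rpower_1, Heps.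
Qed.

Lemma log_weight_continuous c t : 0 < c -> 0 <= t -> continuous (log_weight c) t.
Proof.
  intros Hc Ht. destruct (Req_dec t 0) as [-> | Ht0].
  2: { apply (ex_derive_continuous (log_weight c)). unfold log_weight, Rpower. auto_derive. lra. }
  apply continuity_pt_filterlim. intros eps Heps.
  destruct (Rpower_small (c / 2) (eps * c / 2)) as [d [Hd Hsmall]]; [lra | nra |].
  exists d. split; [lra |]. intros x [_ Hx]. simpl in *. unfold R_dist in *.
  rewrite (log_weight_nonpos_arg c 0), Rminus_0_r in * by lra.
  destruct (Rle_or_lt x 0) as [Hx0 | Hx0].
  { rewrite log_weight_nonpos_arg, Rabs_R0 by exact Hx0. exact Heps. }
  rewrite Rabs_pos_eq in Hx by lra.
  destruct (log_weight_bounds c x Hc ltac:(lra)) as [Hnn _].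
  rewrite Rabs_pos_eq by exact Hnn.
  eapply Rle_lt_trans; [apply log_weight_le_Rpower_half; lra |].
  specialize (Hsmall x ltac:(lra)).
  apply (Rmult_lt_compat_l (2 / c)) in Hsmall; [| apply Rdiv_lt_0_compat; lra].
  replace (2 / c * (eps * c / 2)) with eps in Hsmall by (field; lra). exact Hsmall.
Qed.

Lemma J_integrand_continuous c w t :
  0 < c -> w <= 0 -> 0 <= t -> continuous (J_integrand c w) t.
Proof.
  intros Hc Hw Ht.
  apply (continuous_mult (log_weight c) (fun y => / (1 - w * y))).
  - apply log_weight_continuous; assumption.
  - apply (ex_derive_continuous (fun y => / (1 - w * y))). auto_derive. nra.
Qed.

Lemma ex_RInt_J_integrand c w u v :
  0 < c -> w <= 0 -> 0 <= u <= v -> ex_RInt (J_integrand c w) u v.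
Proof.
  intros Hc Hw Huv. apply (@ex_RInt_continuous R_CompleteNormedModule).
  rewrite Rmin_left, Rmax_right by lra. intros z Hz.
  apply J_integrand_continuous; lra.
Qed.

Lemma J_integrand_bounds c w t :
  0 < c -> w <= 0 -> 0 <= t <= 1 -> 0 <= J_integrand c w t <= / c.
Proof.
  intros Hc Hw Ht. destruct (log_weight_bounds c t Hc Ht) as [H0 H1].
  assert (Hden : 1 <= 1 - w * t) by nra.
  unfold J_integrand. split; [apply Rdiv_le_0_compat; lra |].
  apply Rle_trans with (log_weight c t); [| exact H1].
  unfold Rdiv. rewrite <- (Rmult_1_r (log_weight c t)) at 2.
  apply Rmult_le_compat_l; [exact H0 |].
  rewrite <- Rinv_1. apply Rinv_le_contravar; lra.
Qed.

Lemma Rabs_J_le c w : 0 < c -> w <= 0 -> Rabs (J c w) <= / c.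
Proof.
  intros Hc Hw. unfold J. replace (/ c) with ((1 - 0) * / c) by ring.
  apply abs_RInt_le_const; [lra | apply ex_RInt_J_integrand; lra |].
  intros t Ht. destruct (J_integrand_bounds c w t Hc Hw Ht).
  rewrite Rabs_pos_eq; assumption.
Qed.

Definition log_weight_primitive (c t : R) : R := Rpower t c * (- ln t / c + / (c * c)).

Lemma is_RInt_log_weight_div c e : 0 < c -> 0 < e <= 1 ->
  is_RInt (fun t => log_weight c t / t) e 1 (/ (c * c) - log_weight_primitive c e).
Proof.
  intros Hc He.
  replace (/ (c * c)) with (log_weight_primitive c 1)
    by (unfold log_weight_primitive, Rpower; rewrite ln_1, Rmult_0_r, exp_0; field; lra).
  apply (@is_RInt_derive R_CompleteNormedModule (log_weight_primitive c));
    rewrite Rmin_left, Rmax_right by lra; intros t Ht.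
  - unfold log_weight_primitive, log_weight, Rpower. auto_derive; [repeat split; lra |].
    field. lra.
  - apply (continuous_mult (log_weight c) Rinv).
    + apply log_weight_continuous; lra.
    + apply (ex_derive_continuous Rinv). auto_derive. lra.
Qed.

Lemma log_weight_primitive_bounds c e : 0 < c -> 0 < e <= 1 ->
  0 <= log_weight_primitive c e <= 3 / (c * c) * Rpower e (c / 2).
Proof.
  intros Hc He.
  assert (Heq : log_weight_primitive c e = log_weight c e / c + Rpower e c / (c * c))
    by (unfold log_weight_primitive, log_weight; field; lra).
  destruct (log_weight_bounds c e Hc ltac:(lra)) as [H0 _].
  pose proof (log_weight_le_Rpower_half c e Hc He) as Hhalf.
  assert (Hpow : Rpower e c <= Rpower e (c / 2)).
  { unfold Rpower. pose proof (ln_le_0 e He).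
    destruct (Req_dec (ln e) 0) as [-> | Hne]; [right; f_equal; ring |].
    left. apply exp_increasing. nra. }
  pose proof (exp_pos (c * ln e)). fold (Rpower e c) in *.
  rewrite Heq. split.
  - apply Rplus_le_le_0_compat; apply Rdiv_le_0_compat; nra.
  - apply Rle_trans with (2 / c * Rpower e (c / 2) / c + Rpower e (c / 2) / (c * c)).
    + apply Rplus_le_compat; apply Rmult_le_compat_r;
        try (left; apply Rinv_0_lt_compat; nra); lra.
    + right. field. lra.
Qed.

Section Scaled_J.

Variables c s : R.
Hypothesis Hc : 0 < c.
Hypothesis Hs : 0 < s.

Lemma scaled_J_split e : 0 <= e <= 1 ->
  s * J c (- s) = s * RInt (J_integrand c (- s)) 0 e
                  + RInt (fun t => s * J_integrand c (- s) t) e 1.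
Proof.
  intros He. unfold J.
  rewrite <- (RInt_Chasles (J_integrand c (- s)) 0 e 1)
    by (apply ex_RInt_J_integrand; lra).
  replace (RInt (fun t => s * J_integrand c (- s) t) e 1)
    with (s * RInt (J_integrand c (- s)) e 1)
    by (symmetry; apply (RInt_scal (J_integrand c (- s)) e 1 s);
        apply ex_RInt_J_integrand; lra).
  unfold plus; simpl. ring.
Qed.

Lemma ex_RInt_scaled_J_integrand e : 0 <= e <= 1 ->
  ex_RInt (fun t => s * J_integrand c (- s) t) e 1.
Proof.
  intros He. apply (ex_RInt_scal (J_integrand c (- s)) e 1 s).
  apply ex_RInt_J_integrand; lra.
Qed.

Lemma scaled_J_integrand_defect t : 0 < t ->
  log_weight c t / t - s * J_integrand c (- s) t = log_weight c t / (t * (1 + s * t)).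
Proof.
  intros Ht. unfold J_integrand. replace (1 - - s * t) with (1 + s * t) by ring.
  field. split; nra.
Qed.

Lemma scaled_J_integrand_le t : 0 < t <= 1 ->
  s * J_integrand c (- s) t <= log_weight c t / t.
Proof.
  intros Ht. pose proof (scaled_J_integrand_defect t ltac:(lra)) as Hdef.
  destruct (log_weight_bounds c t Hc ltac:(lra)).
  assert (0 <= log_weight c t / (t * (1 + s * t))) by (apply Rdiv_le_0_compat; nra).
  lra.
Qed.

Lemma scaled_J_integrand_ge e t : 0 < e <= t -> t <= 1 ->
  log_weight c t / t - / (c * s * e * e) <= s * J_integrand c (- s) t.
Proof.
  intros He Ht1. pose proof (scaled_J_integrand_defect t ltac:(lra)) as Hdef.
  destruct (log_weight_bounds c t Hc ltac:(lra)) as [H0 H1].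
  assert (Hsq : e * e <= t * t) by nra.
  assert (Hden : s * e * e <= t * (1 + s * t)) by nra.
  assert (log_weight c t / (t * (1 + s * t)) <= / c / (s * e * e)).
  { unfold Rdiv. apply Rmult_le_compat; [lra | left; apply Rinv_0_lt_compat; nra | lra |].
    apply Rinv_le_contravar; [repeat apply Rmult_lt_0_compat; lra | exact Hden]. }
  replace (/ (c * s * e * e)) with (/ c / (s * e * e)) by (field; lra).
  lra.
Qed.

Lemma scaled_J_le : s * J c (- s) <= / (c * c).
Proof.
  apply Rle_plus_epsilon. intros eps Heps.
  set (e := Rmin 1 (eps * c / s)).
  assert (He : 0 < e <= 1)
    by (split; [apply Rmin_pos; [lra | apply Rdiv_lt_0_compat; nra] | apply Rmin_l]).
  rewrite (scaled_J_split e) by lra.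
  assert (Hhead : RInt (J_integrand c (- s)) 0 e <= e * / c).
  { replace (e * / c) with ((e - 0) * / c) by ring.
    eapply Rle_trans; [apply Rle_abs |].
    apply abs_RInt_le_const; [lra | apply ex_RInt_J_integrand; lra |].
    intros t Ht. destruct (J_integrand_bounds c (- s) t Hc ltac:(lra) ltac:(lra)).
    rewrite Rabs_pos_eq; assumption. }
  assert (Hse : s * (e * / c) <= eps).
  { apply Rle_trans with (s * (eps * c / s * / c)); [| right; field; lra].
    apply Rmult_le_compat_l; [lra |].
    apply Rmult_le_compat_r; [left; apply Rinv_0_lt_compat, Hc | apply Rmin_r]. }
  pose proof (is_RInt_log_weight_div c e Hc He) as Hint.
  assert (Htail : RInt (fun t => s * J_integrand c (- s) t) e 1
                  <= / (c * c) - log_weight_primitive c e).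
  { rewrite <- (is_RInt_unique _ _ _ _ Hint).
    apply RInt_le; [lra | apply ex_RInt_scaled_J_integrand; lra | eexists; exact Hint |].
    intros t Ht. apply scaled_J_integrand_le; lra. }
  destruct (log_weight_primitive_bounds c e Hc He).
  assert (s * RInt (J_integrand c (- s)) 0 e <= s * (e * / c))
    by (apply Rmult_le_compat_l; lra).
  lra.
Qed.

Lemma scaled_J_ge e : 0 < e <= 1 ->
  / (c * c) - log_weight_primitive c e - / (c * s * e * e) <= s * J c (- s).
Proof.
  intros He. set (K := / (c * s * e * e)).
  assert (HK : 0 < K) by (apply Rinv_0_lt_compat; repeat apply Rmult_lt_0_compat; lra).
  rewrite (scaled_J_split e) by lra.
  assert (Hhead : 0 <= RInt (J_integrand c (- s)) 0 e).
  { apply RInt_ge_0; [lra | apply ex_RInt_J_integrand; lra |].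
    intros t Ht. apply (J_integrand_bounds c (- s) t); lra. }
  assert (Hint : is_RInt (fun t => log_weight c t / t - K) e 1
                  (/ (c * c) - log_weight_primitive c e - (1 - e) * K))
    by exact (is_RInt_minus _ _ _ _ _ _ (is_RInt_log_weight_div c e Hc He)
                (is_RInt_const e 1 K)).
  assert (Htail : / (c * c) - log_weight_primitive c e - (1 - e) * K
                  <= RInt (fun t => s * J_integrand c (- s) t) e 1).
  { rewrite <- (is_RInt_unique _ _ _ _ Hint).
    apply RInt_le; [lra | eexists; exact Hint | apply ex_RInt_scaled_J_integrand; lra |].
    intros t Ht. apply scaled_J_integrand_ge; lra. }
  assert (0 <= s * RInt (J_integrand c (- s)) 0 e) by (apply Rmult_le_pos; lra).
  assert (0 <= e * K) by nra.
  lra.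
Qed.

End Scaled_J.

Lemma is_lim_scaled_J c : 0 < c -> is_lim (fun s => s * J c (- s)) p_infty (/ (c * c)).
Proof.
  intros Hc. apply is_lim_spec. intros [eps Heps]; simpl.
  assert (Hcc : 0 < c * c) by nra.
  destruct (Rpower_small (c / 2) (eps * (c * c) / 6)) as [d [Hd Hsmall]];
    [lra | apply Rdiv_lt_0_compat; nra |].
  set (e := d / 2).
  assert (He : 0 < e <= 1) by (unfold e; lra).
  assert (HP : log_weight_primitive c e < eps / 2).
  { destruct (log_weight_primitive_bounds c e Hc He) as [_ HP].
    specialize (Hsmall e ltac:(unfold e; lra)).
    apply (Rmult_lt_compat_l (3 / (c * c))) in Hsmall; [| apply Rdiv_lt_0_compat; lra].
    replace (3 / (c * c) * (eps * (c * c) / 6)) with (eps / 2) in Hsmall by (field; lra).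
    lra. }
  set (q := c * e * e).
  assert (Hq : 0 < q) by (unfold q; repeat apply Rmult_lt_0_compat; lra).
  exists (2 / (q * eps)). intros s Hs.
  assert (Hqe : 0 < 2 / (q * eps)) by (apply Rdiv_lt_0_compat; nra).
  assert (Hs0 : 0 < s) by lra.
  assert (HK : / (c * s * e * e) < eps / 2).
  { replace (c * s * e * e) with (q * s) by (unfold q; ring).
    assert (2 < s * (q * eps)).
    { replace 2 with (2 / (q * eps) * (q * eps)) by (field; nra).
      apply Rmult_lt_compat_r; nra. }
    apply (Rmult_lt_reg_l (q * s)); [nra |]. rewrite Rinv_r by nra. nra. }
  pose proof (scaled_J_le c s Hc Hs0).
  pose proof (scaled_J_ge c s Hc Hs0 e He).
  destruct (log_weight_primitive_bounds c e Hc He).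
  apply Rabs_def1; lra.
Qed.

Lemma is_lim_mul_p_infty k : 0 < k -> is_lim (fun x => k * x) p_infty p_infty.
Proof.
  intros Hk.
  replace p_infty with (Rbar_mult k p_infty) at 2.
  - apply is_lim_scal_l, is_lim_id.
  - simpl. destruct (Rle_dec 0 k) as [H | H]; [| lra].
    destruct (Rle_lt_or_eq_dec 0 k H); [reflexivity | lra].
Qed.

Lemma is_lim_exp_opp_mul k : 0 < k -> is_lim (fun x => exp (- (k * x))) p_infty 0.
Proof.
  intros Hk. apply (is_lim_comp exp (fun x => - (k * x)) p_infty 0 m_infty).
  - exact is_lim_exp_m.
  - apply (is_lim_opp (fun x => k * x) p_infty p_infty), is_lim_mul_p_infty, Hk.
  - exists 0. intros x _. discriminate.
Qed.

Lemma is_lim_mul_bounded_0 (f g : R -> R) M :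
  is_lim f p_infty 0 -> (forall x, Rabs (g x) <= M) ->
  is_lim (fun x => f x * g x) p_infty 0.
Proof.
  intros Hf Hg.
  assert (Hlim : is_lim (fun x => M * Rabs (f x)) p_infty 0).
  { replace (Finite 0) with (Rbar_mult M (Rbar_abs 0))
      by (simpl; rewrite Rabs_R0, Rmult_0_r; reflexivity).
    apply is_lim_scal_l, is_lim_Rabs, Hf. }
  apply (is_lim_le_le_loc (fun x => - (M * Rabs (f x))) (fun x => M * Rabs (f x))).
  - exists 0. intros x _.
    pose proof (Rabs_pos (f x)). pose proof (Hg x).
    pose proof (Rle_abs (f x * g x)). pose proof (Rle_abs (- (f x * g x))).
    rewrite Rabs_Ropp, Rabs_mult in *. split; nra.
  - replace (Finite 0) with (Rbar_opp 0) by (simpl; f_equal; ring).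
    apply is_lim_opp, Hlim.
  - exact Hlim.
Qed.

Lemma exp_div_sinh_sq a x u v w : 0 < a * x ->
  exp x / (4 * sinh (a * x / 2) ^ 2) * (exp (a * x) * u - 2 * v + exp (- (a * x)) * w)
  = (exp x * u - exp (- ((a - 1) * x)) * (2 * v) + exp (- ((2 * a - 1) * x)) * w)
    / (1 - exp (- (a * x))) ^ 2.
Proof.
  intros Hax. set (A := exp (a * x / 2)).
  assert (HA : 1 < A) by (unfold A; rewrite <- exp_0; apply exp_increasing; lra).
  assert (Hsq : exp (a * x) = A * A)
    by (unfold A; rewrite <- exp_plus; f_equal; field).
  assert (Hsq_inv : exp (- (a * x)) = / (A * A)) by (rewrite exp_Ropp, Hsq; reflexivity).
  assert (H1 : exp (- ((a - 1) * x)) = exp x * / (A * A)).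
  { rewrite <- Hsq_inv, <- exp_plus. f_equal. ring. }
  assert (H2 : exp (- ((2 * a - 1) * x)) = exp x * / (A * A) * / (A * A)).
  { rewrite <- Hsq_inv, <- !exp_plus. f_equal. ring. }
  assert (Hsinh : sinh (a * x / 2) = (A - / A) / 2)
    by (unfold sinh; rewrite exp_Ropp; reflexivity).
  rewrite Hsq, Hsq_inv, H1, H2, Hsinh.
  field. split; nra.
Qed.

Definition Rmu_exp_form (a x : R) : R :=
  (exp x * J (a - 1) (- exp x)
   - exp (- ((a - 1) * x)) * (2 * J (a - 1) (-1))
   + exp (- ((2 * a - 1) * x)) * J (a - 1) (- exp (- x)))
  / (1 - exp (- (a * x))) ^ 2.

Lemma Rmu_exp_form_eq gamma b mu : 0 < (gamma - 1) * (b * mu) ->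
  Rmu gamma b mu = (gamma - 1) ^ 2 * Rmu_exp_form (gamma - 1) (b * mu).
Proof.
  intros H. unfold Rmu. cbv zeta. rewrite !F3F2_J.
  replace ((gamma - 1) * b * mu) with ((gamma - 1) * (b * mu)) by ring.
  rewrite exp_div_sinh_sq by exact H.
  unfold Rmu_exp_form, Rdiv. ring.
Qed.

Lemma is_lim_Rmu_exp_form a : 1 < a ->
  is_lim (Rmu_exp_form a) p_infty (/ ((a - 1) * (a - 1))).
Proof.
  intros Ha. set (c := a - 1). assert (Hc : 0 < c) by (unfold c; lra).
  assert (Hmain : is_lim (fun x => exp x * J c (- exp x)) p_infty (/ (c * c))).
  { apply (is_lim_comp (fun s => s * J c (- s)) exp p_infty _ p_infty).
    - apply is_lim_scaled_J, Hc.
    - exact is_lim_exp_p.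
    - exists 0. intros x _. discriminate. }
  assert (Hmid : is_lim (fun x => exp (- (c * x)) * (2 * J c (-1))) p_infty 0).
  { apply (is_lim_mul_bounded_0 _ _ (Rabs (2 * J c (-1)))); [| intros; lra].
    apply is_lim_exp_opp_mul, Hc. }
  assert (Htail : is_lim (fun x => exp (- ((2 * a - 1) * x)) * J c (- exp (- x))) p_infty 0).
  { apply (is_lim_mul_bounded_0 _ _ (/ c)).
    - apply is_lim_exp_opp_mul. lra.
    - intros x. apply Rabs_J_le; [exact Hc |]. pose proof (exp_pos (- x)). lra. }
  assert (Hden : is_lim (fun x => (1 - exp (- (a * x))) ^ 2) p_infty 1).
  { assert (Hbase : is_lim (fun x => 1 - exp (- (a * x))) p_infty (1 - 0)).
    { apply is_lim_minus'; [apply is_lim_const | apply is_lim_exp_opp_mul; lra]. }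
    apply (is_lim_ext (fun x => (1 - exp (- (a * x))) * (1 - exp (- (a * x)))));
      [intros; ring |].
    replace (Finite 1) with (Rbar_mult (1 - 0) (1 - 0)) by (simpl; f_equal; ring).
    apply is_lim_mult; [exact Hbase | exact Hbase | exact I]. }
  replace (Finite (/ (c * c))) with (Rbar_div (/ (c * c) - 0 + 0) 1)
    by (simpl; f_equal; field; lra).
  apply is_lim_div; [| exact Hden | intro H; injection H; lra | exact I].
  apply is_lim_plus'; [apply is_lim_minus' |]; assumption.
Qed.

Theorem mainTheorem6 (gamma beta_c : R) (hgamma : 2 < gamma) (hbeta : 0 < beta_c) :
  is_lim (fun mu => Rmu gamma beta_c mu) p_infty
         (Finite (((gamma - 1) / (gamma - 2)) ^ 2)).
Proof.
  apply (is_lim_ext_loc (fun mu => (gamma - 1) ^ 2 * Rmu_exp_form (gamma - 1) (beta_c * mu))).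
  { exists 0. intros mu Hmu. symmetry. apply Rmu_exp_form_eq.
    apply Rmult_lt_0_compat; [lra | nra]. }
  replace (Finite (((gamma - 1) / (gamma - 2)) ^ 2))
    with (Rbar_mult ((gamma - 1) ^ 2) (/ ((gamma - 1 - 1) * (gamma - 1 - 1))))
    by (simpl; f_equal; field; lra).
  apply is_lim_scal_l.
  apply (is_lim_comp (Rmu_exp_form (gamma - 1)) (fun mu => beta_c * mu) p_infty _ p_infty).
  - apply is_lim_Rmu_exp_form. lra.
  - apply is_lim_mul_p_infty, hbeta.
  - exists 0. intros mu _. discriminate.
Qed.
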